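(* Suppose that the family of vectors $\{\varphi_i\}_{i=1}^M$ does norm retrieval in $\mathbb{R}^N$. Then for every $j\in\{1,\dots,M\}$, if $\varphi_j\notin\mathrm{span}\{\varphi_i: i\neq j\}$, then $\varphi_j$ is orthogonal to $\varphi_i$ for all $i\neq j$. Consequently, a basis of $\mathbb{R}^N$ does norm retrieval in $\mathbb{R}^N$ if and only if it is an orthogonal basis.
   Context: A family of vectors $\{\varphi_i\}_{i=1}^M$ in $\mathbb{R}^N$ does norm retrieval if for all $x,y\in\mathbb{R}^N$, $|\langle x,\varphi_i\rangle|=|\langle y,\varphi_i\rangle|$ for all $i$ implies $\|x\|=\|y\|$. *)

From HB Require Import structures.
From mathcomp Require Import all_boot all_order all_algebra.
From mathcomp Require Import reals.
Set Implicit Arguments. Unset Strict Implicit. Unset Printing Implicit Defensive.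
Import Order.TTheory GRing.Theory Num.Theory.
Local Open Scope ring_scope.

Definition dotv (R : realType) (N : nat) (x y : 'rV[R]_N) : R :=
  \sum_(k < N) x 0 k * y 0 k.

Definition normv (R : realType) (N : nat) (x : 'rV[R]_N) : R :=
  Num.sqrt (dotv x x).

Definition norm_retrieval (R : realType) (N M : nat) (phi : 'I_M -> 'rV[R]_N) : Prop :=
  forall x y : 'rV[R]_N,
    (forall i, `|dotv x (phi i)| = `|dotv y (phi i)|) -> normv x = normv y.

Definition fammx (R : realType) (N M : nat) (phi : 'I_M -> 'rV[R]_N) : 'M[R]_(M, N) :=
  \matrix_(i < M) phi i.

Definition is_basis (R : realType) (N M : nat) (phi : 'I_M -> 'rV[R]_N) : Prop :=
  row_free (fammx phi) /\ row_full (fammx phi).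

From HB Require Import structures.
From mathcomp Require Import all_boot all_order all_algebra.
From mathcomp Require Import reals.
From mathcomp Require Import ring.
Import Order.TTheory GRing.Theory Num.Theory.
Local Open Scope ring_scope.

(* If phi_j lies outside the span W of the other vectors, pick z orthogonal to
   W with b := <phi_j, z> <> 0.  The map x |-> x - (2 <x, phi_j> / b) z flips
   the sign of <x, phi_j> and keeps every other measurement, so norm retrieval
   forces it to preserve norms.  Expanding the norms gives
   <x, phi_j> <x, |z|^2 phi_j - b z> = 0 for every x, so phi_j is parallel to z
   and therefore orthogonal to W.  Conversely, for an orthogonal basis the
   squared norm is recovered from the |<x, phi_i>| by Parseval's identity. *)

Section InnerProduct.
Context {R : realType} {N : nat}.
Implicit Types (x y z : 'rV[R]_N) (a : R).

Lemma dotvC x y : dotv x y = dotv y x.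
Proof. by apply: eq_bigr => k _; rewrite mulrC. Qed.

Lemma dotvDl x y z : dotv (x + y) z = dotv x z + dotv y z.
Proof. by rewrite /dotv -big_split; apply: eq_bigr => k _; rewrite mxE mulrDl. Qed.

Lemma dotvZl a x z : dotv (a *: x) z = a * dotv x z.
Proof. by rewrite /dotv mulr_sumr; apply: eq_bigr => k _; rewrite mxE mulrA. Qed.

Lemma dotvBl x y z : dotv (x - y) z = dotv x z - dotv y z.
Proof. by rewrite dotvDl -scaleN1r dotvZl mulN1r. Qed.

Lemma dotvZr a x z : dotv z (a *: x) = a * dotv z x.
Proof. by rewrite !(dotvC z) dotvZl. Qed.

Lemma dotvBr x y z : dotv z (x - y) = dotv z x - dotv z y.
Proof. by rewrite !(dotvC z) dotvBl. Qed.

Lemma dotv0l x : dotv 0 x = 0.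
Proof. by rewrite -(scale0r 0) dotvZl mul0r. Qed.

Lemma dotv_suml (I : finType) (f : I -> 'rV[R]_N) z :
  dotv (\sum_i f i) z = \sum_i dotv (f i) z.
Proof.
rewrite /dotv exchange_big; apply: eq_bigr => k _.
by rewrite summxE mulr_suml.
Qed.

Lemma dotv_ge0 x : 0 <= dotv x x.
Proof. by apply: sumr_ge0 => k _; rewrite -expr2 sqr_ge0. Qed.

Lemma dotv_eq0 x : (dotv x x == 0) = (x == 0).
Proof.
apply/idP/eqP => [/eqP x0 | ->]; last by rewrite dotv0l.
apply/rowP => k; rewrite mxE; apply/eqP; rewrite -[_ == 0]orbb -mulf_eq0.
by apply/eqP; apply: (psumr_eq0P _ x0) => // l _; rewrite -expr2 sqr_ge0.
Qed.

Lemma dotv_gt0 x : (0 < dotv x x) = (x != 0).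
Proof. by rewrite lt0r dotv_ge0 dotv_eq0 andbT. Qed.

Lemma eq_normv x y : (normv x == normv y) = (dotv x x == dotv y y).
Proof. by rewrite eqr_sqrt ?dotv_ge0. Qed.

Lemma orthogonal_dual_vector {m} {W : 'M[R]_(m, N)} {x} :
  ~~ (x <= W)%MS ->
  exists z, (forall y, (y <= W)%MS -> dotv y z = 0) /\ dotv x z != 0.
Proof.
set C := cokermx W; rewrite submxE => xC_neq0.
have [k xCk_neq0] : exists k, (x *m C) 0 k != 0.
  apply/existsP; apply: contraR xC_neq0 => /existsPn xC0.
  by apply/eqP/rowP => k; rewrite [RHS]mxE; apply/eqP/negPn.
pose z := \row_l C l k.
have dotv_z y : dotv y z = (y *m C) 0 k.
  by rewrite mxE; apply: eq_bigr => l _; rewrite mxE.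
exists z; split; last by rewrite dotv_z.
by move=> y; rewrite submxE dotv_z => /eqP ->; rewrite mxE.
Qed.

Lemma dotv_mul_eq0 {x y} :
  x != 0 -> (forall z, dotv z x * dotv z y = 0) -> y = 0.
Proof.
move=> x_neq0 xy0; apply/eqP; rewrite -dotv_eq0.
have x_gt0 : 0 < dotv x x by rewrite dotv_gt0.
have xy : dotv x y = 0.
  by have /eqP := xy0 x; rewrite mulf_eq0 gt_eqF //= => /eqP.
have := xy0 (x + y); rewrite !dotvDl xy (dotvC y x) xy !add0r addr0 => /eqP.
by rewrite mulf_eq0 gt_eqF.
Qed.

End InnerProduct.

Definition orthogonal_family {R : realType} {N M : nat} (phi : 'I_M -> 'rV[R]_N) :=
  forall i j : 'I_M, i != j -> dotv (phi i) (phi j) = 0.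

Section NormRetrieval.
Context {R : realType} {N M : nat} {phi : 'I_M -> 'rV[R]_N}.

Lemma norm_retrieval_reflection {j z} :
  norm_retrieval phi ->
  (forall i, i != j -> dotv (phi i) z = 0) -> dotv (phi j) z != 0 ->
  forall x, dotv x (phi j) * dotv x (dotv z z *: phi j - dotv (phi j) z *: z) = 0.
Proof.
move=> retr z_orth b_neq0 x.
set a := dotv x (phi j); set b := dotv (phi j) z; pose c := 2 * a / b.
pose y := x - c *: z.
have y_meas i : `|dotv x (phi i)| = `|dotv y (phi i)|.
  rewrite dotvBl dotvZl (dotvC z); have [->|ij] := eqVneq i j.
    by rewrite -/a -/b /c -normrN; congr `|_|; field.
  by rewrite z_orth // mulr0 subr0.
have /eqP := retr x y y_meas; rewrite eq_normv => /eqP xy.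
rewrite !(dotvBl, dotvBr, dotvZl, dotvZr) (dotvC z x) in xy.
have -> : a * dotv x (dotv z z *: phi j - b *: z) =
          b ^+ 2 / 4 * ((dotv x x - c * dotv x z - c * (dotv x z - c * dotv z z)) - dotv x x).
  by rewrite dotvBr !dotvZr -/a /c; field.
by rewrite -xy subrr mulr0.
Qed.

Lemma norm_retrieval_orthogonal_notin_span j :
  norm_retrieval phi ->
  ~~ (phi j <= (\sum_(i | i != j) <<phi i>>)%MS)%MS ->
  forall i, i != j -> dotv (phi j) (phi i) = 0.
Proof.
move=> retr phij_notin i ij.
have [z [z_orth b_neq0]] := orthogonal_dual_vector phij_notin.
have z_orth_phi k : k != j -> dotv (phi k) z = 0.
  by move=> kj; apply: z_orth; apply: (sumsmx_sup k) => //; rewrite genmxE.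
have phij_neq0 : phi j != 0 by apply: contra phij_notin => /eqP ->; rewrite sub0mx.
have z_neq0 : z != 0 by apply: contra b_neq0 => /eqP ->; rewrite dotvC dotv0l.
have /eqP := dotv_mul_eq0 phij_neq0 (norm_retrieval_reflection retr z_orth_phi b_neq0).
rewrite subr_eq0 => /eqP /(congr1 (fun v => dotv v (phi i))).
rewrite !dotvZl (dotvC z (phi i)) (z_orth_phi i ij) mulr0 => /eqP.
by rewrite mulf_eq0 dotv_eq0 (negPf z_neq0) => /eqP.
Qed.

Lemma row_free_notin_span j :
  row_free (fammx phi) -> ~~ (phi j <= (\sum_(i | i != j) <<phi i>>)%MS)%MS.
Proof.
move=> /eqP free; apply/negP => phij_in.
have span_le : (fammx phi <= (\sum_(i | i != j) <<phi i>>)%MS)%MS.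
  apply/row_subP => i; rewrite rowK; have [-> //|ij] := eqVneq i j.
  by apply: (sumsmx_sup i) => //; rewrite genmxE.
have rank_sum : (\rank (\sum_(i | i != j) <<phi i>>)%MS
                  <= \sum_(i | i != j) \rank <<phi i>>%MS)%N.
  exact: (mxrank_sum_leqif _).1.
have sum_rank : (\sum_(i | i != j) \rank <<phi i>>%MS <= M.-1)%N.
  rewrite -[M in M.-1]card_ord -(cardC1 j) -sum1_card.
  by apply: leq_sum => i _; rewrite genmxE rank_leq_row.
have := leq_trans (mxrankS span_le) (leq_trans rank_sum sum_rank).
by rewrite free leqNgt ltn_predL (leq_ltn_trans (leq0n j) (ltn_ord j)).
Qed.

Lemma parseval_orthogonal x :
  row_full (fammx phi) -> orthogonal_family phi ->
  dotv x x = \sum_k dotv x (phi k) ^+ 2 / dotv (phi k) (phi k).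
Proof.
move=> /(submx_full x) /submxP [c ->] orth.
rewrite mulmx_sum_row (eq_bigr (fun k => c 0 k *: phi k)) => [|k _]; last by rewrite rowK.
have coord k : dotv (\sum_i c 0 i *: phi i) (phi k) = c 0 k * dotv (phi k) (phi k).
  rewrite dotv_suml (bigD1 k) //= big1 ?addr0 ?dotvZl // => i ik.
  by rewrite dotvZl orth ?mulr0.
rewrite {1}dotv_suml; apply: eq_bigr => k _.
rewrite dotvZl dotvC coord; have [->|phik_neq0] := eqVneq (dotv (phi k) (phi k)) 0.
  by rewrite invr0 !mulr0.
by field.
Qed.

Lemma orthogonal_norm_retrieval :
  row_full (fammx phi) -> orthogonal_family phi -> norm_retrieval phi.
Proof.
move=> full orth x y same_meas; apply/eqP; rewrite eq_normv.
rewrite !(parseval_orthogonal _ full orth); apply/eqP/eq_bigr => k _.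
by rewrite -[dotv x _ ^+ 2]real_normK ?num_real // same_meas real_normK ?num_real.
Qed.

End NormRetrieval.

Theorem mainTheorem7 (R : realType) (N M : nat) (phi : 'I_M -> 'rV[R]_N) :
  (norm_retrieval phi ->
     forall j : 'I_M,
       ~~ (phi j <= (\sum_(i | i != j) <<phi i>>)%MS)%MS ->
       forall i : 'I_M, i != j -> dotv (phi j) (phi i) = 0)
  /\
  (is_basis phi ->
     (norm_retrieval phi <-> forall i j : 'I_M, i != j -> dotv (phi i) (phi j) = 0)).
Proof.
split=> [retr j|[free full]]; first exact: norm_retrieval_orthogonal_notin_span.
split=> [retr i j ij|]; last exact: orthogonal_norm_retrieval.
apply: (norm_retrieval_orthogonal_notin_span i retr (row_free_notin_span i free)).
by rewrite eq_sym.
Qed.
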